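(* Let $A$ be a $0$-$1$ matrix over a set $\mathcal G$ with no identically zero rows, and let $L_\alpha$ and $\psi$ be as in the context. Then every element of $C(\widetilde\Omega_A,\mathbb Z)$ is equivalent, modulo $L_\alpha\big(\bigoplus_{x\in\mathcal G}C(\Delta_x,\mathbb Z)\big)$, to an element of $\psi(\tilde{\mathfrak R}_A)$.
   Context: $\mathbb F$ is the free group on $\mathcal G$, $\mathbb F^+$ the unital subsemigroup generated by $\mathcal G$. $\Omega_A^\tau$ is the set of $\xi\subset\mathbb F$ such that $e\in\xi$, $\xi$ is convex (contains the shortest path between any two of its elements), for each $\omega\in\xi$ there is at most one $y\in\mathcal G$ with $\omega y\in\xi$, and if $\omega,\omega y\in\xi$ ($y\in\mathcal G$) then for $x\in\mathcal G$: $\omega x^{-1}\in\xi\iff A(x,y)=1$. With the product topology on subsets of $\mathbb F$, $\widetilde\Omega_A$ is the closure in $\Omega_A^\tau$ of the elements with no upper bound for the order $s\le t\iff s^{-1}t\in\mathbb F^+$. $\Delta_t=\{\xi\in\widetilde\Omega_A:t\in\xi\}$ (clopen). $L_\alpha:\bigoplus_{x\in\mathcal G}C(\Delta_x,\mathbb Z)\to C(\widetilde\Omega_A,\mathbb Z)$ is $L_\alpha f=\sum_x\big(f_x-\alpha_x^{-1}(f_x)\big)$, where $f_x$ is extended by $0$ off $\Delta_x$ and $\alpha_x^{-1}(f_x)(\xi)=f_x(x\xi)$ for $\xi\in\Delta_{x^{-1}}$, $0$ otherwise. $\rho_i(j)=A(i,j)$, $\delta_i=$ indicator of $\{i\}$;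 $\tilde R_A\subset\ell^\infty(\mathcal G)$ is the $C^*$-algebra generated by $\mathbf 1$ and all $\rho_i,\delta_i$; $\tilde{\mathfrak R}_A\subset\mathbb Z^{\mathcal G}$ is the ring generated by $\mathbf 1$ and all $\delta_i,\rho_i$. $\tilde{\mathcal G}=\mathcal G\cup\{\star\}$; $c_j(i)=A(i,j)$; $\tilde\Gamma_A$ is the closure of $\{(j,c_j)\}$ in $\tilde{\mathcal G}\times\{0,1\}^{\mathcal G}$; each $f\in\tilde R_A$ has a unique continuous extension $\hat f$ to $\tilde\Gamma_A$ (identifying $j$ with $(j,c_j)$). For $\xi\in\widetilde\Omega_A$, $R_\xi(e)=\{x\in\mathcal G:x^{-1}\in\xi\}$ and $\sigma(\xi)_1$ is the unique element of $\xi\cap\mathcal G$, or $\star$ if that set is empty. $\psi:\tilde R_A\to C(\widetilde\Omega_A)$ is $\psi(f)(\xi)=\hat f(\sigma(\xi)_1,R_\xi(e))$; it is an injective unital $*$-homomorphism with $\psi(\delta_i)=1_{\Delta_i}$ and $\psi(\rho_i)=1_{\Delta_{i^{-1}}}$. *)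

From HB Require Import structures.
From mathcomp Require Import all_boot all_algebra.
From mathcomp Require Import boolp.
From Stdlib Require Import ClassicalEpsilon.

Set Implicit Arguments.
Unset Strict Implicit.
Unset Printing Implicit Defensive.
Import GRing.Theory Num.Theory.

Section FreeGroup.
Variable G : eqType.

(* A letter (x, true) stands for the generator x, (x, false) for x^{-1}. *)
Definition letter := (G * bool)%type.
Definition linv (a : letter) : letter := (a.1, ~~ a.2).

Fixpoint reduced (w : seq letter) : bool :=
  match w with
  | a :: ((b :: _) as w') => (b != linv a) && reduced w'
  | _ => true
  end.

Definition cons_red (a : letter) (w : seq letter) : seq letter :=
  match w with
  | b :: w' => if b == linv a then w' else a :: w
  | [::] => [:: a]
  end.

Definition norm (w : seq letter) : seq letter := foldr cons_red [::] w.

Lemma cons_red_reduced a w : reduced w -> reduced (cons_red a w).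
Proof.
case: w => [|b w] //= H.
case: ifP => [_|/negbT nb].
- by case: w H => [|c w] // /andP[].
- by rewrite [reduced _]/= nb H.
Qed.

Lemma norm_reduced w : reduced (norm w).
Proof. by elim: w => //= a w IH; apply: cons_red_reduced. Qed.

Definition FG := {w : seq letter | reduced w}.
Definition mkFG (w : seq letter) : FG := exist _ (norm w) (norm_reduced w).
Definition fe : FG := mkFG [::].
Definition fmul (u v : FG) : FG := mkFG (val u ++ val v).
Definition finv (u : FG) : FG := mkFG (rev (map linv (val u))).
Definition gen (x : G) : FG := mkFG [:: (x, true)].

Definition positive (u : FG) : bool := all (fun a : letter => a.2) (val u).
Definition fle (s t : FG) : Prop := positive (fmul (finv s) t).

Definition FGset := FG -> Prop.

(* convex: contains the geodesic (in the Cayley tree) between any two elements: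
   the vertices w * p, p a prefix of the reduced word w^{-1} v. *)
Definition convex (xi : FGset) : Prop :=
  forall w v, xi w -> xi v ->
    forall k, xi (fmul w (mkFG (take k (val (fmul (finv w) v))))).

Variable A : G -> G -> bool.

Definition OmegaTau (xi : FGset) : Prop :=
  [/\ xi fe, convex xi,
      (forall w y1 y2, xi w -> xi (fmul w (gen y1)) -> xi (fmul w (gen y2)) -> y1 = y2)
    & (forall w y, xi w -> xi (fmul w (gen y)) ->
        forall x, xi (fmul w (finv (gen x))) <-> A x y)].

Definition unbounded (xi : FGset) : Prop :=
  ~ exists t, forall s, xi s -> fle s t.

(* closure in OmegaTau (product topology on subsets of F) of the unbounded elements *)
Definition Omega (xi : FGset) : Prop :=
  OmegaTau xi /\
  forall F : seq FG, exists eta, [/\ OmegaTau eta, unbounded eta &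
                                   forall s, s \in F -> (eta s <-> xi s)].

Definition Delta (t : FG) (xi : FGset) : Prop := Omega xi /\ xi t.

(* f : D -> Z continuous for the (subspace of the) product topology, Z discrete *)
Definition contOn (D : FGset -> Prop) (f : FGset -> int) : Prop :=
  forall xi, D xi -> exists F : seq FG, forall eta, D eta ->
     (forall s, s \in F -> (eta s <-> xi s)) -> f eta = f xi.

Definition ext (D : FGset -> Prop) (f : FGset -> int) (xi : FGset) : int :=
  if pselect (D xi) then f xi else 0%R.

Definition translate (x : FG) (xi : FGset) : FGset := fun s => xi (fmul (finv x) s).

Definition alpha_inv (x : G) (f : FGset -> int) (xi : FGset) : int :=
  if pselect (Delta (finv (gen x)) xi) then f (translate (gen x) xi) else 0%R.

(* L_alpha applied to the family f, supported on the (finite) list S *)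
Definition Lalpha (S : seq G) (f : G -> FGset -> int) (xi : FGset) : int :=
  (\sum_(x <- S) (ext (Delta (gen x)) (f x) xi - alpha_inv x (f x) xi))%R.

Inductive InRing : (G -> int) -> Prop :=
| InR1 : InRing (fun _ => 1%R)
| InRdelta i : InRing (fun j => Posz (nat_of_bool (j == i)))
| InRrho i : InRing (fun j => Posz (nat_of_bool (A i j)))
| InRadd h1 h2 : InRing h1 -> InRing h2 -> InRing (fun j => h1 j + h2 j)%R
| InRopp h : InRing h -> InRing (fun j => - h j)%R
| InRmul h1 h2 : InRing h1 -> InRing h2 -> InRing (fun j => h1 j * h2 j)%R.

(* sigma(xi)_1 : Some y if y \in xi (y in G), None (= star) if xi \cap G is empty *)
Definition SigmaRel (xi : FGset) (o : option G) : Prop :=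
  match o with Some y => xi (gen y) | None => forall y, ~ xi (gen y) end.

(* hat h (o, R) = v : h is eventually v on the points (j, c_j) near (o, R) in
   tilde G x {0,1}^G, with tilde G = G \cup {star} the one-point compactification
   of the discrete set G. *)
Definition HatLim (h : G -> int) (o : option G) (R : G -> Prop) (v : int) : Prop :=
  exists K F : seq G, forall j,
    (match o with Some y => j = y | None => j \notin K end) ->
    (forall i, i \in F -> (A i j <-> R i)) -> h j = v.

(* psi(h)(xi) = hat h (sigma(xi)_1, R_xi(e)), R_xi(e) = {x : x^{-1} \in xi} *)
Definition psi (h : G -> int) (xi : FGset) : int :=
  epsilon (inhabits 0%R) (fun v => exists o, SigmaRel xi o /\
                               HatLim h o (fun i => xi (finv (gen i))) v).

End FreeGroup.

From HB Require Import structures.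
From mathcomp Require Import all_boot all_algebra.
From mathcomp Require Import boolp ring.
From mathcomp Require Import finmap mathcomp_extra classical_sets topology_structure compact.
From mathcomp Require Import function_spaces bool_topology discrete_topology.
From Stdlib Require Import ClassicalEpsilon.

(* A continuous [g] on [Omega A] only depends on which words of some finite set
   [F] an element contains, by compactness of [Omega A] in the product topology.
   Induct on the length of the longest word of [F].  If it is at most 1, then
   [g xi] is a function of [sigma(xi)_1] and of finitely many bits
   [x^-1 \in xi], which are the bits [A x y] when [sigma(xi)_1 = y]; such a
   function is [psi h] for some [h] in the ring generated by the [delta_i] and
   [rho_i].  Otherwise let [K] be the generators [x] starting a word of [F] and
   subtract [L_alpha] of the restrictions of [g] to the [Delta_x], [x \in K].
   The part [g - sum_x 1_(Delta_x) g] vanishes as soon as [xi] contains some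
   [x \in K], hence never sees a word starting with such an [x].  The part
   [g (x xi)] reads [s \in F] as [x^-1 s \in xi], which is shorter if [s]
   starts with [x] and is otherwise forced by [A], because [x xi] contains [x].
   So the difference depends only on words one letter shorter. *)

Set Implicit Arguments.
Unset Strict Implicit.
Unset Printing Implicit Defensive.
Import GRing.Theory.

Section FreeGroup.
Variable G : eqType.
Local Notation letter := (letter G).
Local Notation FG := (FG G).

Lemma linvK : involutive (@linv G).
Proof. by case=> x []. Qed.

Lemma reduced_behead (a : letter) w : reduced (a :: w) -> reduced w.
Proof. by case: w => //= b w /andP[]. Qed.

Lemma reduced_ohead (a : letter) w : reduced (a :: w) -> ohead w != Some (linv a).
Proof. by case: w => //= b w /andP[nb _]; apply: contra nb => /eqP[->]. Qed.

Lemma norm_id (w : seq letter) : reduced w -> norm w = w.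
Proof.
elim: w => //= a w IH Hr; rewrite IH; last exact: reduced_behead Hr.
by case: w Hr {IH} => //= b w /andP[nb _]; rewrite (negbTE nb).
Qed.

Lemma all_norm (P : pred letter) w : all P w -> all P (norm w).
Proof.
elim: w => //= a w IH /andP[Pa /IH]; case: (norm w) => [|b u] /=; first by rewrite Pa.
by case/andP=> Pb Pu; case: ifP => _ //=; rewrite Pa Pb Pu.
Qed.

(* [rcat u w] is the reduced form of [u ++ w] when [w] is reduced. *)
Definition rcat (u w : seq letter) := foldr (@cons_red G) w u.

Lemma rcat_cat u v w : rcat (u ++ v) w = rcat u (rcat v w).
Proof. by rewrite /rcat foldr_cat. Qed.

Lemma norm_cat u v : norm (u ++ v) = rcat u (norm v).
Proof. by rewrite /norm foldr_cat. Qed.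

Lemma rcat_reduced u w : reduced w -> reduced (rcat u w).
Proof. by elim: u => //= a u IH Hw; apply/cons_red_reduced/IH. Qed.

Lemma cons_red_linv (a : letter) w : reduced w ->
  cons_red a (cons_red (linv a) w) = w.
Proof.
case: w => [|b w] /=; first by rewrite eqxx.
case: ifP => [/eqP|_ _]; last by rewrite /= eqxx.
rewrite linvK => <-.
by case: w => [|c w] //= /andP[nc _]; rewrite (negbTE nc).
Qed.

Lemma rcat_cons_red a r w : reduced r -> reduced w ->
  rcat (cons_red a r) w = cons_red a (rcat r w).
Proof.
case: r => [|b r] //= Hr Hw; case: ifP => // /eqP ->.
by rewrite cons_red_linv // rcat_reduced.
Qed.

Lemma rcat_norm u w : reduced w -> rcat (norm u) w = rcat u w.
Proof.
move=> Hw; elim: u => //= a u IH.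
by rewrite rcat_cons_red ?IH ?norm_reduced.
Qed.

Lemma rcat_linv u w : reduced w -> rcat (rev (map (@linv G) u)) (rcat u w) = w.
Proof.
move=> Hw; elim: u => //= a u IH.
rewrite rev_cons -cats1 rcat_cat /=.
have := cons_red_linv (linv a) (rcat_reduced u Hw).
by rewrite linvK => ->.
Qed.

Lemma val_mkFG_reduced (w : seq letter) : reduced w -> val (mkFG w) = w.
Proof. exact: norm_id. Qed.

Lemma mkFGK (u : FG) : mkFG (val u) = u.
Proof. by apply: val_inj; rewrite val_mkFG_reduced //; exact: valP. Qed.

Lemma val_fmul (u v : FG) : val (fmul u v) = rcat (val u) (val v).
Proof. by rewrite /= norm_cat norm_id //; exact: valP. Qed.

Lemma fmulA (u v w : FG) : fmul (fmul u v) w = fmul u (fmul v w).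
Proof.
apply: val_inj; rewrite !val_fmul.
by rewrite -{1}(norm_id (valP v)) -norm_cat rcat_norm ?rcat_cat //; exact: valP.
Qed.

Lemma fmul1l (u : FG) : fmul (fe G) u = u.
Proof. by apply: val_inj; rewrite val_fmul. Qed.

Lemma fmul1r (u : FG) : fmul u (fe G) = u.
Proof. by apply: val_inj; rewrite val_fmul /= -[rcat _ _]/(norm _) norm_id //; exact: valP. Qed.

Lemma fmulVl (u : FG) : fmul (finv u) u = fe G.
Proof.
apply: val_inj; rewrite val_fmul /= rcat_norm; last exact: valP.
by rewrite -{2}(norm_id (valP u)) rcat_linv.
Qed.

Lemma fmulVr (u : FG) : fmul u (finv u) = fe G.
Proof.
apply: val_inj; rewrite val_fmul /=.
have := rcat_linv (rev (map (@linv G) (val u))) (erefl true : reduced [::]).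
by rewrite map_rev revK -map_comp (eq_map linvK) map_id.
Qed.

Lemma fmulKl (u v : FG) : fmul (finv u) (fmul u v) = v.
Proof. by rewrite -fmulA fmulVl fmul1l. Qed.

Lemma fmulKVl (u v : FG) : fmul u (fmul (finv u) v) = v.
Proof. by rewrite -fmulA fmulVr fmul1l. Qed.

Lemma finvK (u : FG) : finv (finv u) = u.
Proof. by rewrite -[LHS]fmul1r -(fmulVl u) fmulKl. Qed.

Lemma finv_fmul (u v : FG) : finv (fmul u v) = fmul (finv v) (finv u).
Proof.
have uvK : fmul (fmul u v) (fmul (finv v) (finv u)) = fe G.
  by rewrite fmulA fmulKVl fmulVr.
by rewrite -[LHS]fmul1r -uvK fmulKl.
Qed.

Lemma finv1 : finv (fe G) = fe G.
Proof. exact: val_inj. Qed.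

Definition flet (a : letter) : FG := mkFG [:: a].

Lemma flet_pos y : flet (y, true) = gen y.
Proof. by []. Qed.

Lemma flet_neg y : flet (y, false) = finv (gen y).
Proof. exact: val_inj. Qed.

Lemma finv_flet a : finv (flet a) = flet (linv a).
Proof. exact: val_inj. Qed.

Lemma FG_cons (u : FG) a w : val u = a :: w -> u = fmul (flet a) (mkFG w).
Proof.
move=> Hu; have Hr : reduced (a :: w) by rewrite -Hu; exact: valP.
apply: val_inj; rewrite val_fmul val_mkFG_reduced ?Hu; last exact: reduced_behead Hr.
by case: w Hr {Hu} => //= b w /andP[nb _]; rewrite (negbTE nb).
Qed.

End FreeGroup.

Section OmegaTau.
Variables (G : eqType) (A : G -> G -> bool).
Local Notation letter := (letter G).
Local Notation FG := (FG G).
Local Notation OT := (OmegaTau A).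

Lemma OmegaTau_fe xi : OT xi -> xi (fe G).
Proof. by case. Qed.

Lemma OmegaTau_gen_uniq xi y1 y2 : OT xi -> xi (gen y1) -> xi (gen y2) -> y1 = y2.
Proof. by case=> he _ uniq_succ _ h1 h2; apply: (uniq_succ (fe G)); rewrite ?fmul1l. Qed.

Lemma OmegaTau_finv_gen xi x y : OT xi -> xi (gen y) ->
  (xi (finv (gen x)) <-> A x y).
Proof. by case=> he _ _ HA hy; have := HA (fe G) y he; rewrite !fmul1l; apply. Qed.

Lemma OmegaTau_head xi u a w : OT xi -> xi u -> val u = a :: w -> xi (flet a).
Proof.
by case=> he conv _ _ hu Hu; have := conv _ _ he hu 1; rewrite finv1 !fmul1l Hu /= take0.
Qed.

Lemma translate1 (xi : FGset G) : translate (fe G) xi = xi.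
Proof. by apply: funext => s; rewrite /translate finv1 fmul1l. Qed.

Lemma translate_fmul t u (xi : FGset G) :
  translate t (translate u xi) = translate (fmul t u) xi.
Proof. by apply: funext => s; rewrite /translate finv_fmul fmulA. Qed.

Lemma OmegaTau_translate_self t xi : OT xi -> translate t xi t.
Proof. by rewrite /translate fmulVl; exact: OmegaTau_fe. Qed.

Lemma translate_cons (xi : FGset G) u a w : val u = a :: w ->
  (xi u <-> translate (flet (linv a)) xi (mkFG w)).
Proof. by move=> /FG_cons Hu; rewrite /translate finv_flet linvK -Hu. Qed.

Lemma OmegaTau_translate xi t : OT xi -> xi (finv t) -> OT (translate t xi).
Proof.
case=> he conv uniq_succ HA ht; rewrite /translate; split.
- by rewrite fmul1r.
- move=> w v hw hv k; have := conv _ _ hw hv k.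
  by rewrite finv_fmul finvK [fmul (fmul (finv w) t) _]fmulA fmulKVl fmulA.
- by move=> w y1 y2 hw; rewrite -!fmulA; exact: uniq_succ.
- by move=> w y hw; rewrite -!fmulA => hy x; rewrite -fmulA; exact: HA.
Qed.

Lemma unbounded_translate t (eta : FGset G) : unbounded eta -> unbounded (translate t eta).
Proof.
move=> Hu [T HT]; apply: Hu; exists (fmul (finv t) T) => s hs.
have := HT (fmul t s); rewrite /translate fmulKl => /(_ hs).
by rewrite /fle finv_fmul fmulA.
Qed.

Lemma Omega_OmegaTau xi : Omega A xi -> OT xi.
Proof. by case. Qed.

Lemma Omega_translate xi t : Omega A xi -> xi (finv t) -> Omega A (translate t xi).
Proof.
case=> HT approx ht; split; first exact: OmegaTau_translate.
move=> F; have [eta [Heta Hu Hag]] := approx (finv t :: map (fmul (finv t)) F).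
have het : eta (finv t) by apply/Hag; rewrite ?mem_head.
exists (translate t eta); split.
- exact: OmegaTau_translate.
- exact: unbounded_translate.
- by move=> s sF; apply: Hag; rewrite inE map_f ?orbT.
Qed.

Lemma Delta_translate x xi :
  Delta A (finv (gen x)) xi -> Delta A (gen x) (translate (gen x) xi).
Proof.
case=> Hxi hx; split; first exact: Omega_translate.
exact: OmegaTau_translate_self (Omega_OmegaTau Hxi).
Qed.

Lemma OmegaTau_agree_cons_neg zeta zeta' y (w : seq letter) :
  reduced ((y, false) :: w) -> OT zeta -> OT zeta' ->
  (forall eta eta', OT eta -> OT eta' -> eta (gen y) -> eta' (gen y) ->
     (eta (mkFG w) <-> eta' (mkFG w))) ->
  (zeta (finv (gen y)) <-> zeta' (finv (gen y))) ->
  (zeta (mkFG ((y, false) :: w)) <-> zeta' (mkFG ((y, false) :: w))).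
Proof.
move=> Hr Hz Hz' tail_agree Ey.
have Hv : val (mkFG ((y, false) :: w)) = (y, false) :: w by rewrite val_mkFG_reduced.
have [hy|hy] := pselect (zeta (finv (gen y))); last first.
  split=> hw; case: hy; [|apply/Ey]; rewrite -flet_neg.
  - exact: OmegaTau_head Hz hw Hv.
  - exact: OmegaTau_head Hz' hw Hv.
have hy' : zeta' (finv (gen y)) by apply/Ey.
rewrite !(translate_cons _ Hv) /= flet_pos.
apply: tail_agree; try exact: OmegaTau_translate.
- exact: OmegaTau_translate_self.
- exact: OmegaTau_translate_self.
Qed.

(* Once [zeta] contains the generator [x], its only forward step from [e] is
   [x]; every other branch is backward, and [A] dictates which backward steps
   are present. *)
Lemma OmegaTau_agree_gen x zeta zeta' (w : seq letter) : reduced w ->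
  OT zeta -> OT zeta' -> zeta (gen x) -> zeta' (gen x) ->
  ohead w != Some (x, true) -> (zeta (mkFG w) <-> zeta' (mkFG w)).
Proof.
elim: w x zeta zeta' => [|[y []] w IH] x z z' Hr Hz Hz' hx hx' Hh.
- by split=> _; apply: OmegaTau_fe.
- have Hv : val (mkFG ((y, true) :: w)) = (y, true) :: w by rewrite val_mkFG_reduced.
  have yx : y <> x by move=> E; rewrite E eqxx in Hh.
  split=> hw; case: yx.
  + exact: OmegaTau_gen_uniq Hz (OmegaTau_head Hz hw Hv) hx.
  + exact: OmegaTau_gen_uniq Hz' (OmegaTau_head Hz' hw Hv) hx'.
- apply: (OmegaTau_agree_cons_neg Hr Hz Hz').
    move=> eta eta' Heta Heta' hy hy'.
    exact: IH (reduced_behead Hr) Heta Heta' hy hy' (reduced_ohead Hr).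
  by rewrite (OmegaTau_finv_gen _ Hz hx) (OmegaTau_finv_gen _ Hz' hx').
Qed.

Lemma OmegaTau_agree_neg zeta zeta' (s : FG) y w : OT zeta -> OT zeta' ->
  val s = (y, false) :: w -> (zeta (finv (gen y)) <-> zeta' (finv (gen y))) ->
  (zeta s <-> zeta' s).
Proof.
move=> Hz Hz' Es; have Hr : reduced ((y, false) :: w) by rewrite -Es; exact: valP.
rewrite -(mkFGK s) Es; apply: (OmegaTau_agree_cons_neg Hr Hz Hz').
move=> eta eta' Heta Heta' hy hy'.
exact: OmegaTau_agree_gen (reduced_behead Hr) Heta Heta' hy hy' (reduced_ohead Hr).
Qed.

Lemma OmegaTau_negative zeta (w : seq letter) : reduced w -> OT zeta ->
  (forall y, zeta (gen y) -> ohead w != Some (y, true)) ->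
  zeta (mkFG w) -> all (fun a : letter => ~~ a.2) w.
Proof.
elim: w zeta => // [[y b] w] IH z Hr Hz Hfwd Hw.
have Hv : val (mkFG ((y, b) :: w)) = (y, b) :: w by rewrite val_mkFG_reduced.
have hy := OmegaTau_head Hz Hw Hv.
case: b Hr Hfwd Hw Hv hy => Hr Hfwd Hw Hv hy.
  by have := Hfwd y hy; rewrite /= eqxx.
move: Hw; rewrite (translate_cons _ Hv) /= flet_pos => Hw.
rewrite flet_neg in hy.
have Hz1 : OT (translate (gen y) z) by exact: OmegaTau_translate.
have hz1 : translate (gen y) z (gen y) by exact: OmegaTau_translate_self.
apply: (IH _ (reduced_behead Hr) Hz1) => // y' hy'.
by rewrite (OmegaTau_gen_uniq Hz1 hy' hz1); exact: reduced_ohead Hr.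
Qed.

Lemma unbounded_has_gen eta : OT eta -> unbounded eta -> exists j, eta (gen j).
Proof.
move=> Heta Hu; apply: contrapT => no_gen; apply: Hu; exists (fe G) => s hs.
have neg_s : all (fun a : letter => ~~ a.2) (val s).
  apply: OmegaTau_negative (valP s) Heta _ _; last by rewrite mkFGK.
  by move=> y hy; case: no_gen; exists y.
rewrite /fle fmul1r /positive /=; apply: all_norm.
by rewrite all_rev all_map; apply: sub_all neg_s => -[x []].
Qed.

End OmegaTau.

Section Ring.
Variables (G : eqType) (A : G -> G -> bool).

Lemma InRing_ext (h h' : G -> int) : h =1 h' -> InRing A h -> InRing A h'.
Proof. by move=> /funext ->. Qed.

Lemma InRing_const (c : int) : InRing A (fun _ => c).
Proof.
have InRing_nat n : InRing A (fun _ => Posz n).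
  elim: n => [|n IH].
    by apply: InRing_ext (InRadd (InR1 A) (InRopp (InR1 A))) => j; rewrite subrr.
  by apply: InRing_ext (InRadd IH (InR1 A)) => j; rewrite -addn1 PoszD.
case: c => n; first exact: InRing_nat.
by apply: InRing_ext (InRopp (InRing_nat n.+1)) => j; rewrite NegzE.
Qed.

Definition atom (c : bool * G) (j : G) : bool :=
  if c.1 then j == c.2 else A c.2 j.

Lemma InRing_atom c : InRing A (fun j => Posz (atom c j)).
Proof. by case: c => [[] i]; [apply: InRdelta | apply: InRrho]. Qed.

Lemma InRing_of_atoms (cs : seq (bool * G)) (h : G -> int) :
  (forall j j', (forall c, c \in cs -> atom c j = atom c j') -> h j = h j') ->
  InRing A h.
Proof.
elim: cs h => [|c cs IH] h hE.
  have [[j0 _]|no_j] := pselect (exists j : G, True).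
    by apply: InRing_ext (InRing_const (h j0)) => j; apply: hE.
  by apply: InRing_ext (InR1 A) => j; case: no_j; exists j.
pose h_ b j := epsilon (inhabits 0%R) (fun v => exists j',
  [/\ atom c j' = b, forall d, d \in cs -> atom d j' = atom d j & v = h j']).
have h_E j : h_ (atom c j) j = h j.
  rewrite /h_; set P := (fun v => _).
  have [|j' [c_j' cs_j' ->]] := epsilon_spec (inhabits 0%R) P; first by exists (h j), j.
  by apply: hE => d; rewrite inE => /orP[/eqP->|] //; exact: cs_j'.
have InRing_h_ b : InRing A (h_ b).
  apply: IH => j j' E; rewrite /h_; congr epsilon.
  apply: funext => v; apply: propext.
  by split=> -[j'' [? E'' ?]]; exists j''; split=> // d dcs; rewrite E'' ?E.
apply: InRing_ext (InRadd (InRmul (InRing_atom c) (InRing_h_ true))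
  (InRmul (InRadd (InR1 A) (InRopp (InRing_atom c))) (InRing_h_ false))) => j /=.
by case E: (atom c j); rewrite -E h_E E /=; ring.
Qed.

End Ring.

Section Psi.
Variables (G : eqType) (A : G -> G -> bool).

Definition psi_spec (h : G -> int) (xi : FGset G) (v : int) :=
  exists o, SigmaRel xi o /\ HatLim A h o (fun i => xi (finv (gen i))) v.

Lemma psi_unique h xi v : psi_spec h xi v ->
  (forall v', psi_spec h xi v' -> v' = v) -> psi A h xi = v.
Proof. by move=> hv uniq_v; apply/uniq_v/(epsilon_spec (inhabits 0%R) _ (ex_intro _ v hv)). Qed.

Lemma psi_gen h xi y : OmegaTau A xi -> xi (gen y) -> psi A h xi = h y.
Proof.
move=> Hxi hy; apply: psi_unique; first by exists (Some y); split=> //; exists [::], [::] => j ->.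
move=> v [[y'|] [/= hy' [K [N HK]]]]; last by case: (hy' y).
rewrite -(OmegaTau_gen_uniq Hxi hy' hy); symmetry; apply: HK => // i _.
by rewrite (OmegaTau_finv_gen _ Hxi hy').
Qed.

Lemma Omega_no_gen_witness xi (K N : seq G) : Omega A xi -> (forall y, ~ xi (gen y)) ->
  exists2 j, j \notin K & forall i, i \in N -> (A i j <-> xi (finv (gen i))).
Proof.
case=> _ /(_ ([seq gen k | k <- K] ++ [seq finv (gen i) | i <- N])) [eta [Heta Hu Hag]] no_gen.
have [j hj] := unbounded_has_gen Heta Hu.
exists j.
  by apply/negP => jK; apply: (no_gen j); apply/Hag; rewrite ?mem_cat ?map_f.
move=> i iN; rewrite -(OmegaTau_finv_gen _ Heta hj); apply: Hag.
by rewrite mem_cat [X in _ || X]map_f ?orbT.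
Qed.

Lemma psi_no_gen h xi (K N : seq G) v : Omega A xi -> (forall y, ~ xi (gen y)) ->
  (forall j, j \notin K -> (forall i, i \in N -> (A i j <-> xi (finv (gen i)))) -> h j = v) ->
  psi A h xi = v.
Proof.
move=> Hxi no_gen hv; apply: psi_unique; first by exists None; split=> //; exists K, N.
move=> v' [[y|] [/= hy [K' [N' HK']]]]; first by case: (no_gen y).
have [j] := Omega_no_gen_witness (K ++ K') (N ++ N') Hxi no_gen.
rewrite mem_cat negb_or => /andP[jK jK'] HA.
rewrite -(HK' j) // ?(hv j) // => i iN; by apply: HA; rewrite mem_cat iN ?orbT.
Qed.

End Psi.

Section Dependence.
Variables (G : eqType) (A : G -> G -> bool).
Local Notation FG := (FG G).
Local Notation OT := (OmegaTau A).

Definition agree_on (F : seq FG) (xi eta : FGset G) :=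
  forall s, s \in F -> (xi s <-> eta s).

Definition depends_only_on (F : seq FG) (phi : FGset G -> int) :=
  forall xi eta, Omega A xi -> Omega A eta -> agree_on F xi eta -> phi xi = phi eta.

Lemma depends_only_on_contOn (D : FGset G -> Prop) F phi :
  (forall xi, D xi -> Omega A xi) -> depends_only_on F phi -> contOn D phi.
Proof. by move=> DO dep xi Dxi; exists F => eta Deta; apply: dep; apply: DO. Qed.

Definition pos_head (s : FG) : option G :=
  if val s is (x, true) :: _ then Some x else None.
Definition neg_head (s : FG) : option G :=
  if val s is (x, false) :: _ then Some x else None.
Definition pos_heads (F : seq FG) : seq G := undup (pmap pos_head F).
Definition neg_heads (F : seq FG) : seq G := pmap neg_head F.

Lemma mem_pos_heads F s y w : s \in F -> val s = (y, true) :: w -> y \in pos_heads F.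
Proof.
by move=> sF Es; rewrite mem_undup mem_pmap; apply/mapP; exists s; rewrite // /pos_head Es.
Qed.

Lemma mem_neg_heads F s y w : s \in F -> val s = (y, false) :: w -> y \in neg_heads F.
Proof. by move=> sF Es; rewrite mem_pmap; apply/mapP; exists s; rewrite // /neg_head Es. Qed.

Definition gen_pattern (P N : seq G) (j : G) (xi : FGset G) :=
  (forall y, y \in P -> (xi (gen y) <-> y = j)) /\
  (forall z, z \in N -> (xi (finv (gen z)) <-> A z j)).

Lemma agree_on_short F xi eta : (forall s, s \in F -> size (val s) <= 1) ->
  OT xi -> OT eta ->
  (forall y, y \in pos_heads F -> (xi (gen y) <-> eta (gen y))) ->
  (forall z, z \in neg_heads F -> (xi (finv (gen z)) <-> eta (finv (gen z)))) ->
  agree_on F xi eta.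
Proof.
move=> short Hxi Heta EP EN s sF; have := short s sF.
case Es: (val s) => [|[y []] [|b w]] //= _.
- have -> : s = fe G by apply: val_inj; rewrite Es.
  by split=> _; [exact: OmegaTau_fe Heta | exact: OmegaTau_fe Hxi].
- have -> : s = gen y by apply: val_inj; rewrite Es.
  by apply: EP; apply: mem_pos_heads sF Es.
- have -> : s = finv (gen y) by apply: val_inj; rewrite Es.
  by apply: EN; apply: mem_neg_heads sF Es.
Qed.

Definition value_on (phi : FGset G -> int) (Q : FGset G -> Prop) : int :=
  epsilon (inhabits 0%R) (fun v => exists2 xi, Omega A xi /\ Q xi & v = phi xi).

Lemma value_onE phi Q xi :
  (forall xi eta, Omega A xi -> Omega A eta -> Q xi -> Q eta -> phi xi = phi eta) ->
  Omega A xi -> Q xi -> value_on phi Q = phi xi.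
Proof.
move=> const Hxi Qxi; rewrite /value_on; set P := (fun v => _).
have [|eta [Heta Qeta] ->] := epsilon_spec (inhabits 0%R) P; first by exists (phi xi), xi.
exact: const.
Qed.

Definition pattern_value (F : seq FG) (phi : FGset G -> int) (j : G) : int :=
  value_on phi (gen_pattern (pos_heads F) (neg_heads F) j).

Lemma pattern_valueE F phi j xi : (forall s, s \in F -> size (val s) <= 1) ->
  depends_only_on F phi -> Omega A xi ->
  gen_pattern (pos_heads F) (neg_heads F) j xi -> pattern_value F phi j = phi xi.
Proof.
move=> short dep; apply: value_onE => {}xi eta Hxi Heta [Pxi Nxi] [Peta Neta].
have EP y : y \in pos_heads F -> (xi (gen y) <-> eta (gen y)).
  by move=> yP; rewrite Pxi ?Peta.
have EN z : z \in neg_heads F -> (xi (finv (gen z)) <-> eta (finv (gen z))).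
  by move=> zN; rewrite Nxi ?Neta.
apply: dep => //.
exact: agree_on_short short (Omega_OmegaTau Hxi) (Omega_OmegaTau Heta) EP EN.
Qed.

Lemma gen_pattern_atoms P N j j' :
  (forall c, c \in [seq (true, y) | y <- P] ++ [seq (false, z) | z <- N] ->
     atom A c j = atom A c j') ->
  gen_pattern P N j = gen_pattern P N j'.
Proof.
move=> E; apply: funext => xi; apply: propext.
have EP y : y \in P -> (y = j <-> y = j').
  move=> yP; have Ey : (j == y) = (j' == y) by apply: (E (true, y)); rewrite mem_cat map_f.
  by split=> Eyj; apply/eqP; rewrite eq_sym; [rewrite -Ey | rewrite Ey]; rewrite Eyj eqxx.
have EN z : z \in N -> A z j = A z j'.
  by move=> zN; apply: (E (false, z)); rewrite mem_cat [X in _ || X]map_f ?orbT.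
by split=> -[HP HN]; split=> [y yP|z zN]; rewrite ?HP ?HN ?EP ?EN.
Qed.

Lemma InRing_pattern_value F phi : InRing A (pattern_value F phi).
Proof.
apply: (InRing_of_atoms
  (cs := [seq (true, y) | y <- pos_heads F] ++ [seq (false, z) | z <- neg_heads F])).
by move=> j j' /gen_pattern_atoms E; rewrite /pattern_value E.
Qed.

Lemma depends_short_psi F phi : (forall s, s \in F -> size (val s) <= 1) ->
  depends_only_on F phi ->
  exists h, InRing A h /\ forall xi, Omega A xi -> phi xi = psi A h xi.
Proof.
move=> short dep; exists (pattern_value F phi); split; first exact: InRing_pattern_value.
move=> xi Hxi; have Hxi' := Omega_OmegaTau Hxi.
have [[y hy]|no_gen] := pselect (exists y, xi (gen y)).
  rewrite (psi_gen _ Hxi' hy); symmetry; apply: pattern_valueE => //.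
  split=> [y' _|z _]; last exact: OmegaTau_finv_gen.
  by split=> [hy'|->] //; exact: OmegaTau_gen_uniq Hxi' hy' hy.
symmetry; apply: (psi_no_gen _ (K := pos_heads F) (N := neg_heads F)) => // [y hy|j jP HN].
  by apply: no_gen; exists y.
apply: pattern_valueE => //; split=> [y yP|z zN]; last by rewrite HN.
by split=> [hy|Eyj]; [case: no_gen; exists y | move: jP; rewrite -Eyj yP].
Qed.

End Dependence.

Section Lalpha.
Variables (G : eqType) (A : G -> G -> bool).

Lemma contOn0 (D : FGset G -> Prop) : contOn D (fun _ => 0%R).
Proof. by move=> xi _; exists [::]. Qed.

Lemma contOn_add (D : FGset G -> Prop) f1 f2 : contOn D f1 -> contOn D f2 ->
  contOn D (fun xi => f1 xi + f2 xi)%R.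
Proof.
move=> c1 c2 xi Dxi; have [F1 HF1] := c1 xi Dxi; have [F2 HF2] := c2 xi Dxi.
exists (F1 ++ F2) => eta Deta Hag.
by rewrite (HF1 eta) ?(HF2 eta) // => s sF; apply: Hag; rewrite mem_cat sF ?orbT.
Qed.

Lemma Lalpha_add S (f1 f2 : G -> FGset G -> int) xi :
  Lalpha A S (fun x xi => f1 x xi + f2 x xi)%R xi = (Lalpha A S f1 xi + Lalpha A S f2 xi)%R.
Proof.
rewrite /Lalpha -big_split; apply: eq_bigr => x _ /=.
by rewrite /ext /alpha_inv; case: pselect => ? /=; case: pselect => ? /=; ring.
Qed.

Lemma Lalpha_term_eq0 (f : FGset G -> int) x xi :
  (forall xi, Delta A (gen x) xi -> f xi = 0%R) ->
  (ext (Delta A (gen x)) f xi - alpha_inv A x f xi = 0)%R.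
Proof.
move=> f0; rewrite /ext /alpha_inv.
case: pselect => [Dxi|_] /=; case: pselect => [Dxi'|_] /=.
- by rewrite (f0 _ Dxi) (f0 _ (Delta_translate Dxi')) subrr.
- by rewrite (f0 _ Dxi) subrr.
- by rewrite (f0 _ (Delta_translate Dxi')) subrr.
- by rewrite subrr.
Qed.

Lemma Lalpha_widen S T (f : G -> FGset G -> int) xi :
  uniq S -> uniq T -> {subset S <= T} ->
  (forall x, x \notin S -> forall xi, Delta A (gen x) xi -> f x xi = 0%R) ->
  Lalpha A T f xi = Lalpha A S f xi.
Proof.
move=> uS uT sST f0; rewrite /Lalpha (bigID (mem S)) /=.
rewrite [X in (_ + X)%R]big1 ?addr0 => [|x xS]; last exact/Lalpha_term_eq0/f0.
rewrite -big_filter; apply/perm_big/uniq_perm; rewrite ?filter_uniq // => x.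
by rewrite mem_filter andb_idr //; apply: sST.
Qed.

Definition psi_mod_L (phi : FGset G -> int) :=
  exists h, InRing A h /\ exists (S : seq G) (f : G -> FGset G -> int),
    [/\ uniq S, (forall x, contOn (Delta A (gen x)) (f x)),
        (forall x, x \notin S -> forall xi, Delta A (gen x) xi -> f x xi = 0%R)
      & forall xi, Omega A xi -> phi xi = (psi A h xi + Lalpha A S f xi)%R].

Lemma psi_mod_L_Lalpha K (f : G -> FGset G -> int) phi :
  uniq K -> (forall x, contOn (Delta A (gen x)) (f x)) ->
  (forall x, x \notin K -> forall xi, Delta A (gen x) xi -> f x xi = 0%R) ->
  psi_mod_L (fun xi => phi xi - Lalpha A K f xi)%R -> psi_mod_L phi.
Proof.
move=> uK cf f0 [h [Hh [S [g [uS cg g0 Eg]]]]].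
exists h; split=> //; exists (undup (K ++ S)), (fun x xi => f x xi + g x xi)%R.
split=> [||x|xi Hxi]; first exact: undup_uniq.
- by move=> x; apply: contOn_add.
- rewrite mem_undup mem_cat negb_or => /andP[xK xS] xi Dxi.
  by rewrite f0 // g0 // addr0.
have widen_K : Lalpha A (undup (K ++ S)) f xi = Lalpha A K f xi.
  by apply: Lalpha_widen; rewrite ?undup_uniq // => x xK; rewrite mem_undup mem_cat xK.
have widen_S : Lalpha A (undup (K ++ S)) g xi = Lalpha A S g xi.
  by apply: Lalpha_widen; rewrite ?undup_uniq // => x xS; rewrite mem_undup mem_cat xS orbT.
rewrite Lalpha_add widen_K widen_S -[phi xi](subrK (Lalpha A K f xi)) Eg //; ring.
Qed.

End Lalpha.

Section Shortening.
Variables (G : eqType) (A : G -> G -> bool).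
Local Notation FG := (FG G).

Definition head_part (F : seq FG) (phi : FGset G -> int) (x : G) : FGset G -> int :=
  if x \in pos_heads F then phi else fun _ => 0%R.

Definition shorten (F : seq FG) : seq FG :=
  [seq gen x | x <- pos_heads F] ++
  [seq finv (gen x) | x <- pos_heads F ++ neg_heads F] ++
  [seq mkFG (behead (val s)) | s <- F].

Lemma shorten_size F n : (forall s, s \in F -> size (val s) <= n.+2) ->
  forall s, s \in shorten F -> size (val s) <= n.+1.
Proof.
move=> Fsize s; rewrite !mem_cat => /or3P[] /mapP[t tF ->] //.
rewrite val_mkFG_reduced ?size_behead; first by have := Fsize t tF; case: size.
by case: (val t) (valP t) => //= a w /reduced_behead.
Qed.

Lemma Lalpha_head_part F phi xi :
  (phi xi - Lalpha A (pos_heads F) (head_part F phi) xi =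
   (phi xi - \sum_(x <- pos_heads F) ext (Delta A (gen x)) phi xi)
   + \sum_(x <- pos_heads F) alpha_inv A x phi xi)%R.
Proof.
have -> : Lalpha A (pos_heads F) (head_part F phi) xi =
    (\sum_(x <- pos_heads F) ext (Delta A (gen x)) phi xi
     - \sum_(x <- pos_heads F) alpha_inv A x phi xi)%R.
  rewrite /Lalpha -sumrB big_seq [RHS]big_seq; apply: eq_bigr => x xK.
  by rewrite /head_part xK.
ring.
Qed.

Lemma ext_in (D : FGset G -> Prop) f xi : D xi -> ext D f xi = f xi.
Proof. by rewrite /ext; case: pselect. Qed.

Lemma ext_out (D : FGset G -> Prop) f xi : ~ D xi -> ext D f xi = 0%R.
Proof. by rewrite /ext; case: pselect. Qed.

Lemma sum_ext_gen (K : seq G) phi xi y : uniq K -> y \in K ->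
  Omega A xi -> xi (gen y) ->
  (\sum_(x <- K) ext (Delta A (gen x)) phi xi = phi xi)%R.
Proof.
move=> uK yK Hxi hy; rewrite (bigD1_seq y) //= big1 ?addr0 => [|x xy].
  by rewrite ext_in.
rewrite ext_out // => -[_ hx].
by rewrite (OmegaTau_gen_uniq (Omega_OmegaTau Hxi) hx hy) eqxx in xy.
Qed.

Lemma sum_ext_no_gen (K : seq G) phi xi : (forall y, y \in K -> ~ xi (gen y)) ->
  (\sum_(x <- K) ext (Delta A (gen x)) phi xi = 0)%R.
Proof.
move=> no_gen; rewrite big1_seq // => x /= xK.
by rewrite ext_out // => -[_ /(no_gen x xK)].
Qed.

Lemma forward_part_agree F phi xi eta : depends_only_on A F phi ->
  Omega A xi -> Omega A eta -> agree_on (shorten F) xi eta ->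
  (phi xi - \sum_(x <- pos_heads F) ext (Delta A (gen x)) phi xi =
   phi eta - \sum_(x <- pos_heads F) ext (Delta A (gen x)) phi eta)%R.
Proof.
move=> dep Hxi Heta Hag.
have Hxi' := Omega_OmegaTau Hxi; have Heta' := Omega_OmegaTau Heta.
have agree_pos y : y \in pos_heads F -> (xi (gen y) <-> eta (gen y)).
  by move=> yK; apply: Hag; rewrite mem_cat map_f.
have agree_neg z : z \in neg_heads F -> (xi (finv (gen z)) <-> eta (finv (gen z))).
  by move=> zN; apply: Hag; rewrite !mem_cat [X in _ || (X || _)]map_f ?mem_cat ?zN ?orbT.
have [[y yK hy]|no_gen] := pselect (exists2 y, y \in pos_heads F & xi (gen y)).
  have hy' : eta (gen y) by apply/agree_pos.
  by rewrite !(sum_ext_gen phi (y := y)) ?subrr ?undup_uniq.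
have no_gen' y : y \in pos_heads F -> ~ eta (gen y).
  by move=> yK hy; apply: no_gen; exists y => //; apply/agree_pos.
rewrite !sum_ext_no_gen // => [|y yK hy]; last by apply: no_gen; exists y.
congr (_ - _)%R; apply: dep => // s sF.
case Es: (val s) => [|[y []] w].
- have -> : s = fe G by apply: val_inj; rewrite Es.
  by split=> _; [exact: OmegaTau_fe Heta' | exact: OmegaTau_fe Hxi'].
- have yK := mem_pos_heads sF Es.
  split=> hs; [case: no_gen; exists y => // | case: (no_gen' y yK)];
    rewrite -flet_pos; [exact: OmegaTau_head Hxi' hs Es | exact: OmegaTau_head Heta' hs Es].
- apply: (OmegaTau_agree_neg Hxi' Heta' Es).
  by apply: agree_neg; exact: mem_neg_heads sF Es.
Qed.

Lemma alpha_inv_in x f xi :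
  Delta A (finv (gen x)) xi -> alpha_inv A x f xi = f (translate (gen x) xi).
Proof. by rewrite /alpha_inv; case: pselect. Qed.

Lemma alpha_inv_out x f xi : ~ Delta A (finv (gen x)) xi -> alpha_inv A x f xi = 0%R.
Proof. by rewrite /alpha_inv; case: pselect. Qed.

Lemma alpha_inv_agree F phi x xi eta : depends_only_on A F phi ->
  Omega A xi -> Omega A eta -> (xi (finv (gen x)) <-> eta (finv (gen x))) ->
  (forall s, s \in F -> (xi (mkFG (behead (val s))) <-> eta (mkFG (behead (val s))))) ->
  alpha_inv A x phi xi = alpha_inv A x phi eta.
Proof.
move=> dep Hxi Heta Ex Etail.
have [hx|nx] := pselect (xi (finv (gen x))); last first.
  by rewrite !alpha_inv_out // => -[_] //; rewrite -Ex.
have hx' : eta (finv (gen x)) by rewrite -Ex.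
rewrite !alpha_inv_in //; apply: dep; try exact: Omega_translate.
move=> s sF; have [|Es] := eqVneq (ohead (val s)) (Some (x, true)).
  case Es: (val s) => [|a w] //= [Ea]; subst a.
  rewrite !(translate_cons _ Es) /= flet_neg !translate_fmul !fmulVl !translate1.
  by have := Etail s sF; rewrite Es.
rewrite -(mkFGK s); apply: OmegaTau_agree_gen Es; first exact: valP.
- exact: OmegaTau_translate (Omega_OmegaTau Hxi) hx.
- exact: OmegaTau_translate (Omega_OmegaTau Heta) hx'.
- exact: OmegaTau_translate_self (Omega_OmegaTau Hxi).
- exact: OmegaTau_translate_self (Omega_OmegaTau Heta).
Qed.

Lemma backward_part_agree F phi xi eta : depends_only_on A F phi ->
  Omega A xi -> Omega A eta -> agree_on (shorten F) xi eta ->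
  (\sum_(x <- pos_heads F) alpha_inv A x phi xi =
   \sum_(x <- pos_heads F) alpha_inv A x phi eta)%R.
Proof.
move=> dep Hxi Heta Hag; rewrite big_seq [RHS]big_seq; apply: eq_bigr => x xK.
apply: (alpha_inv_agree dep) => //.
- by apply: Hag; rewrite !mem_cat [X in _ || (X || _)]map_f ?mem_cat ?xK ?orbT.
- by move=> s sF; apply: Hag; rewrite !mem_cat [X in _ || (_ || X)]map_f ?orbT.
Qed.

Lemma depends_shorten F phi : depends_only_on A F phi ->
  depends_only_on A (shorten F)
    (fun xi => phi xi - Lalpha A (pos_heads F) (head_part F phi) xi)%R.
Proof.
move=> dep xi eta Hxi Heta Hag; rewrite !Lalpha_head_part.
by rewrite (forward_part_agree dep Hxi Heta Hag) (backward_part_agree dep Hxi Heta Hag).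
Qed.

Lemma depends_psi_mod_L n F phi : (forall s, s \in F -> size (val s) <= n.+1) ->
  depends_only_on A F phi -> psi_mod_L A phi.
Proof.
elim: n F phi => [|n IH] F phi Fsize dep.
  have [h [Hh Ephi]] := depends_short_psi Fsize dep.
  exists h; split=> //; exists [::], (fun _ _ => 0%R); split=> //.
  - by move=> x; apply: contOn0.
  - by move=> xi Hxi; rewrite Ephi // /Lalpha big_nil addr0.
apply: (psi_mod_L_Lalpha (K := pos_heads F) (f := head_part F phi)).
- exact: undup_uniq.
- move=> x; rewrite /head_part; case: ifP => _; last exact: contOn0.
  by apply: depends_only_on_contOn dep => xi [].
- by move=> x xK xi _; rewrite /head_part (negbTE xK).
exact: IH (shorten_size Fsize) (depends_shorten dep).
Qed.

End Shortening.

(* [compact_cover] is stated for pointed spaces. *)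
HB.instance Definition _ (G : eqType) :=
  isPointed.Build (prod_topology (fun _ : FG G => bool)) (fun _ => false).

Section Compactness.
Variables (G : eqType) (A : G -> G -> bool).
Local Notation FG := (FG G).
Local Notation OT := (OmegaTau A).
Local Notation T := (prod_topology (fun _ : FG => bool)).
Local Open Scope classical_set_scope.

Lemma OmegaTau_of_approx (xi : FGset G) :
  (forall L : seq FG, exists2 eta, OT eta & agree_on L eta xi) -> OT xi.
Proof.
move=> approx; split.
- have [eta Heta Hag] := approx [:: fe G]; apply/Hag; [exact: mem_head | exact: OmegaTau_fe Heta].
- move=> w v hw hv k; set u := fmul w _.
  have [eta [_ conv _ _] Hag] := approx [:: w; v; u].
  by apply/Hag; rewrite ?inE ?eqxx ?orbT //; apply: conv; apply/Hag; rewrite ?inE ?eqxx ?orbT.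
- move=> w y1 y2 hw h1 h2.
  have [eta [_ _ uniq_succ _] Hag] := approx [:: w; fmul w (gen y1); fmul w (gen y2)].
  by apply: (uniq_succ w); apply/Hag; rewrite ?inE ?eqxx ?orbT.
- move=> w y hw hy x.
  have [eta [_ _ _ HA] Hag] := approx [:: w; fmul w (gen y); fmul w (finv (gen x))].
  rewrite -(HA w y); try by apply/Hag; rewrite ?inE ?eqxx ?orbT.
  by split=> h; apply/Hag; rewrite ?inE ?eqxx ?orbT.
Qed.

Definition cylinder (b : T) (L : seq FG) : set T :=
  [set c : T | forall s, s \in L -> c s = b s].

Lemma open_cylinder b L : open (cylinder b L).
Proof.
elim: L => [|s L IH].
  have -> : cylinder b [::] = setT by apply/seteqP; split=> // c _ s.
  exact: openT.
have -> : cylinder b (s :: L) = proj s @^-1` [set b s] `&` cylinder b L.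
  apply/seteqP; split=> c /=.
  - by move=> Hc; split=> [|t tL]; apply: Hc; rewrite inE ?eqxx ?tL ?orbT.
  - by case=> Hs HL t; rewrite inE => /orP[/eqP->|/HL].
apply: openI => //; apply: open_comp; last exact: discrete_open.
by move=> f _; exact: proj_continuous.
Qed.

Definition Omega_points : set T := [set b : T | Omega A (fun s => b s)].

Lemma closed_Omega_points : closed Omega_points.
Proof.
move=> b Hb.
have approx (L : seq FG) : exists eta, [/\ OT eta, unbounded eta & agree_on L eta b].
  have [|c [[_ Hc] Hcyl]] := Hb (cylinder b L).
    by apply: open_nbhs_nbhs; split; [exact: open_cylinder | by []].
  have [eta [Heta Hu Hag]] := Hc L; exists eta; split=> // s sL.
  by rewrite Hag // Hcyl.
split=> //; apply: OmegaTau_of_approx => L.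
by have [eta [Heta _ Hag]] := approx L; exists eta.
Qed.

Lemma compact_Omega_points : compact Omega_points.
Proof.
apply: (subclosed_compact closed_Omega_points (B := setT)) => //.
have := @tychonoff _ (fun _ : FG => bool) _ (fun=> bool_compact).
by congr (compact _); rewrite eqEsubset.
Qed.

Lemma Omega_points_asbool xi : Omega A xi -> Omega_points (fun s => `[< xi s >]).
Proof.
rewrite /Omega_points /=; suff -> : (fun s => `[< xi s >] : Prop) = xi by [].
by apply: funext => s; rewrite asboolE.
Qed.

Lemma contOn_depends_only_on g : contOn (Omega A) g -> exists F, depends_only_on A F g.
Proof.
move=> hg.
have local (b : T) : exists L : seq FG, Omega_points b -> forall eta, Omega A eta ->
    agree_on L eta (fun s => b s) -> g eta = g (fun s => b s).
  have [/hg [L HL]|nO] := pselect (Omega_points b); first by exists L.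
  by exists [::] => /nO.
have [Lf HLf] := boolp.choice local.
have := compact_Omega_points; rewrite compact_cover.
move=> /(_ T Omega_points (fun b => cylinder b (Lf b))).
case=> [b _|b Ob|D' sD' cover]; [exact: open_cylinder | by exists b | ].
exists (flatten [seq Lf b | b <- D']) => xi eta Hxi Heta Hag.
have [b /= bD Hb] := cover _ (Omega_points_asbool Hxi).
have Ob : Omega_points b by move: (sD' b bD); rewrite in_setE.
have Exi : agree_on (Lf b) xi (fun s => b s) by move=> s sL; rewrite -(Hb s sL) asboolE.
rewrite (HLf b Ob xi Hxi Exi) (HLf b Ob eta Heta) // => s sL.
rewrite -Hag; first exact: Exi.
by apply/flattenP; exists (Lf b) => //; apply: map_f.
Qed.

End Compactness.

Theorem lemma4p10 (G : eqType) (A : G -> G -> bool)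
  (hA : forall i : G, exists j : G, A i j)
  (g : FGset G -> int) (hg : contOn (Omega A) g) :
  exists h : G -> int, InRing A h /\
  exists (S : seq G) (f : G -> FGset G -> int),
    [/\ uniq S,
        (forall x, contOn (Delta A (gen x)) (f x)),
        (forall x, x \notin S -> forall xi, Delta A (gen x) xi -> f x xi = 0%R)
      & (forall xi, Omega A xi -> g xi = (psi A h xi + Lalpha A S f xi)%R)].
Proof.
(* The argument does not use [hA]. *)
have [F dep] := contOn_depends_only_on hg.
apply: (@depends_psi_mod_L _ A (\max_(s <- F) size (val s)) F _ _ dep) => s sF.
by apply/leqW; apply: leq_bigmax_seq.
Qed.
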